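(* Let $G$ be a non-separable graph with subgraphs $G_1,G_2$ such that $V(G_1)\cap V(G_2)=\{u,v\}$ (two distinct vertices), $V(G_1)\cup V(G_2)=V(G)$, $E(G_1)\cap E(G_2)=\emptyset$ and $E(G_1)\cup E(G_2)=E(G)$. Then $$F(G,\lambda)=\frac{F(G_1+uv,\lambda)\,F(G_2+uv,\lambda)}{\lambda-1}+F(G_1,\lambda)F(G_2,\lambda).$$
   Context: Graphs are finite, undirected, possibly with loops and parallel edges. The flow polynomial $F(G,\lambda)$ is determined by: $F(G,\lambda)=1$ if $E(G)=\emptyset$; $F(G,\lambda)=0$ if $G$ has a bridge; multiplicative over disjoint unions; $F(G,\lambda)=(\lambda-1)F(G-e,\lambda)$ if $e$ is a loop; otherwise $F(G,\lambda)=F(G/e,\lambda)-F(G-e,\lambda)$ ($G/e$ = contraction of $e$). A graph is non-separable if it is connected, has no cut-vertex, and either has no loops or has exactly one vertex and one edge. $H+uv$ denotes the graph obtained from $H$ by adding a new edge joining $u$ and $v$. *)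

(* Finite multigraphs (loops and parallel edges allowed)
   with vertices labelled by nat: a vertex list and an edge list of
   endpoint pairs (each list entry is one edge; duplicates = parallel
   edges; (x,x) = loop). *)
From mathcomp Require Import all_boot all_order all_algebra.
Set Implicit Arguments. Unset Strict Implicit. Unset Printing Implicit Defensive.
Import GRing.Theory.
Local Open Scope ring_scope.

Definition edge := (nat * nat)%type.

Fixpoint reachn (k : nat) (es : seq edge) (S : seq nat) : seq nat :=
  match k with
  | 0 => S
  | k'.+1 => reachn k' es
      (undup (S ++ [seq e.2 | e <- es & e.1 \in S]
                ++ [seq e.1 | e <- es & e.2 \in S]))
  end.

(* x and y are joined by a path in the graph with edge list es
   (a path uses at most size es edges) *)
Definition connectedb (es : seq edge) (x y : nat) : bool :=
  y \in reachn (size es) es [:: x].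

Definition del_edge (i : nat) (es : seq edge) : seq edge :=
  take i es ++ drop i.+1 es.

(* a bridge: a non-loop edge whose endpoints are disconnected after its
   deletion (equivalently, whose deletion increases the number of
   components) *)
Definition is_bridge (es : seq edge) (i : nat) : bool :=
  (i < size es)%N &&
  let e := nth (0%N, 0%N) es i in
  (e.1 != e.2) && ~~ connectedb (del_edge i es) e.1 e.2.

Definition has_bridge (es : seq edge) : bool :=
  has (is_bridge es) (iota 0 (size es)).

Definition contract (e : edge) (es : seq edge) : seq edge :=
  let sub z := if z == e.2 then e.1 else z in
  [seq (sub f.1, sub f.2) | f <- es].

Fixpoint flow_aux (n : nat) (es : seq edge) : {poly int} :=
  match n with
  | 0 => 1
  | n'.+1 =>
    match es with
    | [::] => 1
    | e :: es' =>
      if has_bridge es then 0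
      else if e.1 == e.2 then ('X - 1) * flow_aux n' es'
      else flow_aux n' (contract e es') - flow_aux n' es'
    end
  end.

(* The flow polynomial F(G, lambda) of a graph with edge list es
   (it does not depend on isolated vertices). *)
Definition flowpoly (es : seq edge) : {poly int} := flow_aux (size es) es.

Definition wf_graph (vs : seq nat) (es : seq edge) : Prop :=
  forall e, e \in es -> e.1 \in vs /\ e.2 \in vs.

Definition graph_connected (vs : seq nat) (es : seq edge) : Prop :=
  vs != [::] /\ forall x y, x \in vs -> y \in vs -> connectedb es x y.

Definition del_vertex_edges (w : nat) (es : seq edge) : seq edge :=
  [seq e <- es | (e.1 != w) && (e.2 != w)].

Definition cut_vertex (vs : seq nat) (es : seq edge) (w : nat) : Prop :=
  w \in vs /\ exists x y, [/\ x \in vs, y \in vs, x != w, y != w &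
                            ~~ connectedb (del_vertex_edges w es) x y].

Definition has_loop (es : seq edge) : bool := has (fun e => e.1 == e.2) es.

Definition nonseparable (vs : seq nat) (es : seq edge) : Prop :=
  [/\ graph_connected vs es,
      (forall w, ~ cut_vertex vs es w) &
      ~~ has_loop es \/ (size (undup vs) = 1%N /\ size es = 1%N)].

From mathcomp Require Import all_boot all_order all_algebra.
From Stdlib Require Import FunctionalExtensionality.
From mathcomp Require Import ring.
Set Implicit Arguments. Unset Strict Implicit. Unset Printing Implicit Defensive.
Import GRing.Theory.
Local Open Scope ring_scope.

(* For a finite field F, F(G, #|F|) counts the nowhere-zero F-flows of G: the
   count satisfies the same deletion-contraction recursion, and a bridge,
   being the only edge across some vertex set, carries no nowhere-zero flow.
   A nowhere-zero flow of G restricts to flows of G_1 and G_2 that are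
   conserved except at u and v, with net flow al from u to v in G_1 and -al in
   G_2. For al = 0 these pairs are counted by F(G_1) F(G_2); scaling shows that
   every al <> 0 gives the same count N_1 N_2, and (#|F| - 1) N_i = F(G_i + uv).
   The identity thus holds at every prime, hence as polynomials. *)

Lemma count_sub_ltn (T : eqType) (a b : pred T) (s : seq T) :
  subpred a b -> (exists2 x, x \in s & b x && ~~ a x) -> (count a s < count b s)%N.
Proof.
move=> ab; elim: s => [|y s IHs] [x]; first by rewrite in_nil.
rewrite inE => /orP [/eqP ->|xs] bx /=.
  case/andP: bx => -> /negbTE -> /=; rewrite add0n add1n ltnS.
  exact: sub_count.
rewrite -addnS; apply: leq_add; last by apply: IHs; exists x.
by case: (a y) (ab y) => // ->.
Qed.

Section Reachability.
Variable es : seq edge.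

Definition reach_step (T : seq nat) : seq nat :=
  undup (T ++ [seq e.2 | e <- es & e.1 \in T] ++ [seq e.1 | e <- es & e.2 \in T]).

Definition edge_closed (T : seq nat) : bool :=
  all (fun f : edge => (f.1 \in T) == (f.2 \in T)) es.

Definition inner_edges (T : seq nat) : nat :=
  count (fun f : edge => (f.1 \in T) && (f.2 \in T)) es.

Lemma reach_step_sub T : {subset T <= reach_step T}.
Proof. by move=> x xT; rewrite mem_undup mem_cat xT. Qed.

Lemma reach_step_edge f T : f \in es ->
  (f.1 \in T -> f.2 \in reach_step T) /\ (f.2 \in T -> f.1 \in reach_step T).
Proof.
move=> fes; split=> fT; rewrite mem_undup !mem_cat; apply/orP; right; apply/orP.
  by left; apply/mapP; exists f => //; rewrite mem_filter fT.
by right; apply/mapP; exists f => //; rewrite mem_filter fT.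
Qed.

Lemma eq_reach_step T T' : T =i T' -> reach_step T =i reach_step T'.
Proof.
move=> eqT x; rewrite !mem_undup !mem_cat eqT.
by rewrite (@eq_filter _ (fun e : edge => e.1 \in T) (fun e => e.1 \in T'))
  ?(@eq_filter _ (fun e : edge => e.2 \in T) (fun e => e.2 \in T')) // => e; rewrite eqT.
Qed.

Lemma reach_step_closed T : edge_closed T -> reach_step T =i T.
Proof.
move=> /allP clT x; apply/idP/idP; last exact: reach_step_sub.
rewrite mem_undup !mem_cat => /orP [//|/orP [] /mapP [f]].
  by rewrite mem_filter => /andP [f1 fes] ->; rewrite -(eqP (clT f fes)).
by rewrite mem_filter => /andP [f2 fes] ->; rewrite (eqP (clT f fes)).
Qed.

Lemma eq_reachn k S S' : S =i S' -> reachn k es S =i reachn k es S'.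
Proof. by elim: k S S' => [|k IHk] S S' eqS //=; apply/IHk/eq_reach_step. Qed.

Lemma reachn_closed k S : edge_closed S -> reachn k es S =i S.
Proof.
elim: k S => [|k IHk] S clS x //=.
by rewrite (eq_reachn k (reach_step_closed clS)); apply: IHk.
Qed.

Lemma reachn_sub k S : {subset S <= reachn k es S}.
Proof. by elim: k S => [|k IHk] S x xS //=; apply/IHk/reach_step_sub. Qed.

Lemma eq_edge_closed T T' : T =i T' -> edge_closed T = edge_closed T'.
Proof. by move=> eqT; apply: eq_all => f; rewrite !eqT. Qed.

Lemma inner_edges_step T : ~~ edge_closed T -> (inner_edges T < inner_edges (reach_step T))%N.
Proof.
move=> /allPn [f fes nf]; apply: count_sub_ltn.
  by move=> g /andP [g1 g2]; rewrite !reach_step_sub.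
exists f => //; case: (reach_step_edge T fes) => f12 f21.
case E1: (f.1 \in T); case E2: (f.2 \in T); rewrite E1 E2 in nf => //=.
  by rewrite reach_step_sub // f12.
by rewrite f21 // reach_step_sub.
Qed.

Lemma reachn_closed_or_inner k S :
  edge_closed (reachn k es S) \/ (k + inner_edges S <= inner_edges (reachn k es S))%N.
Proof.
elim: k S => [|k IHk] S /=; first by right.
have [clS|nclS] := boolP (edge_closed S).
  left; rewrite (eq_edge_closed (eq_reachn k (reach_step_closed clS))).
  by rewrite (eq_edge_closed (reachn_closed k clS)).
case: (IHk (reach_step S)) => [->|le_inner]; first by left.
right; apply: leq_trans le_inner; rewrite addSn -addnS leq_add2l.
exact: inner_edges_step.
Qed.

(* Every step that does not close the set adds an inner edge. *)
Lemma reachn_size_closed S : edge_closed (reachn (size es) es S).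
Proof.
case: (reachn_closed_or_inner (size es) S) => // le_inner.
have all_inner : inner_edges (reachn (size es) es S) = size es.
  apply/eqP; rewrite eqn_leq count_size /=; apply: leq_trans le_inner; exact: leq_addr.
apply/allP => f fes; move: all_inner; rewrite /inner_edges => /eqP.
by rewrite -all_count => /allP /(_ f fes) /andP [-> ->].
Qed.

End Reachability.

Section FlowCounting.
Variable F : finFieldType.
Implicit Types (a b g : nat -> F) (s : seq edge) (k : (nat -> F) -> nat).

Definition boundary (e : edge) : nat -> F := fun w => (w == e.1)%:R - (w == e.2)%:R.

(* [nzflow_sum s a k] sums [k] over the demands [a + sum_f c_f * boundary f] of
   all nowhere-zero assignments [c] on [s]; the demand of a flow at a vertex is
   its net outflow there. *)
Fixpoint nzflow_sum s a k : nat :=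
  match s with
  | [::] => k a
  | e :: s' => (\sum_(c : F | c != 0%R) nzflow_sum s' (a \+ c \*o boundary e) k)%N
  end.

Lemma add_funA a b g : a \+ b \+ g = a \+ (b \+ g).
Proof. by apply: functional_extensionality => w /=; rewrite addrA. Qed.

Lemma add_funC a b : a \+ b = b \+ a.
Proof. by apply: functional_extensionality => w /=; rewrite addrC. Qed.

Lemma add_fun0 a : a \+ \0 = a.
Proof. by apply: functional_extensionality => w /=; rewrite addr0. Qed.

Lemma add_0fun a : \0 \+ a = a.
Proof. by apply: functional_extensionality => w /=; rewrite add0r. Qed.

Lemma eq_nzflow_sum s a k k' : k =1 k' -> nzflow_sum s a k = nzflow_sum s a k'.
Proof.
elim: s a => [|e s IHs] a eqk /=; first exact: eqk.
by apply: eq_bigr => c _; apply: IHs.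
Qed.

Lemma nzflow_sum_cat s1 s2 a k :
  nzflow_sum (s1 ++ s2) a k = nzflow_sum s1 a (fun b => nzflow_sum s2 b k).
Proof. by elim: s1 a => [|e s IHs] a //=; apply: eq_bigr => c _; apply: IHs. Qed.

Lemma nzflow_sum_shift s a b k :
  nzflow_sum s (a \+ b) k = nzflow_sum s a (fun g => k (g \+ b)).
Proof.
elim: s a => [|e s IHs] a //=; apply: eq_bigr => c _.
by rewrite -IHs add_funA [b \+ _]add_funC -add_funA.
Qed.

Lemma nzflow_sum_big (I : finType) (P : pred I) s a (k : I -> (nat -> F) -> nat) :
  nzflow_sum s a (fun g => \sum_(i | P i) k i g)%N = (\sum_(i | P i) nzflow_sum s a (k i))%N.
Proof.
elim: s a => [|e s IHs] a //=.
rewrite (eq_bigr (fun c => \sum_(i | P i) nzflow_sum s (a \+ c \*o boundary e) (k i))%N).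
  by rewrite exchange_big.
by move=> c _; apply: IHs.
Qed.

Lemma nzflow_sum_mulr s a k (m : nat) :
  nzflow_sum s a (fun g => k g * m)%N = (nzflow_sum s a k * m)%N.
Proof.
elim: s a => [|e s IHs] a //=.
by rewrite big_distrl /=; apply: eq_bigr => c _; apply: IHs.
Qed.

Lemma nzflow_sum0 s a : nzflow_sum s a (fun _ => 0%N) = 0%N.
Proof. by elim: s a => [|e s IHs] a //=; apply: big1. Qed.

Lemma nzflow_sum_inv (I : (nat -> F) -> Prop) s a k k' :
  I \0 -> (forall g f c, f \in s -> I g -> I (g \+ c \*o boundary f)) ->
  (forall g, I g -> k (a \+ g) = k' (a \+ g)) ->
  nzflow_sum s a k = nzflow_sum s a k'.
Proof.
move=> I0 IS; elim: s a IS => [|e s IHs] a IS eqk /=; first by rewrite -(add_fun0 a) eqk.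
apply: eq_bigr => c _; apply: IHs.
  by move=> g f c' fs; apply: IS; rewrite inE fs orbT.
move=> g Ig; rewrite add_funA [_ \+ g]add_funC; apply: eqk.
by apply: IS => //; rewrite mem_head.
Qed.

Lemma nzflow_sum_comm s1 s2 a k :
  nzflow_sum s1 a (fun b => nzflow_sum s2 b k) = nzflow_sum s2 a (fun b => nzflow_sum s1 b k).
Proof.
elim: s1 a => [|e s IHs] a /=; first exact: eq_nzflow_sum.
rewrite (eq_bigr (fun c => nzflow_sum s2 (a \+ c \*o boundary e)
                              (fun b => nzflow_sum s b k))); last by move=> c _; apply: IHs.
by rewrite nzflow_sum_big; apply: eq_bigr => c _; rewrite nzflow_sum_shift.
Qed.

Lemma perm_nzflow_sum s t a k : perm_eq s t -> nzflow_sum s a k = nzflow_sum t a k.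
Proof.
move=> st; apply: (@catCA_perm_subst _ _ (fun s => nzflow_sum s a k)) st => s1 s2 s3.
rewrite !nzflow_sum_cat (eq_nzflow_sum _ _ (fun b => nzflow_sum_cat s2 s3 b k)).
by rewrite (eq_nzflow_sum _ _ (fun b => nzflow_sum_cat s1 s3 b k)) nzflow_sum_comm.
Qed.

Lemma nzflow_sum_scale s a k c : c != 0 ->
  nzflow_sum s a k = nzflow_sum s (c \*o a) (fun g => k (c^-1 \*o g)).
Proof.
move=> cnz; elim: s a => [|e s IHs] a /=.
  by congr k; apply: functional_extensionality => w /=; rewrite mulrA mulVf // mul1r.
symmetry; rewrite (reindex_inj (mulfI cnz)) /=.
rewrite (eq_bigl (fun c' => c' != 0)); last by move=> c'; rewrite mulf_eq0 (negbTE cnz).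
apply: eq_bigr => c' _; rewrite IHs; congr nzflow_sum.
by apply: functional_extensionality => w /=; rewrite [RHS]mulrDr mulrA.
Qed.

Lemma sum_nz_const (m : nat) : (\sum_(c : F | c != 0%R) m)%N = (#|F|.-1 * m)%N.
Proof. by rewrite -(cardC1 (0 : F)) -sum_nat_const; apply: eq_bigl => c; rewrite !inE. Qed.

Lemma sum_mem_indicator (S : seq nat) x : uniq S ->
  \sum_(w <- S) ((w == x)%:R : F) = (x \in S)%:R.
Proof.
move=> uS; have [xS|xS] := boolP (x \in S).
  by rewrite (bigD1_seq x) //= eqxx big1 ?addr0 // => w /negbTE ->.
rewrite big1_seq // => w /andP [_ wS]; have [ewx|//] := eqVneq w x.
by rewrite -ewx wS in xS.
Qed.

Lemma sum_boundary (S : seq nat) f : uniq S ->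
  \sum_(w <- S) boundary f w = (f.1 \in S)%:R - (f.2 \in S)%:R.
Proof. by move=> uS; rewrite sumrB !sum_mem_indicator. Qed.

Definition conserved (V : seq nat) a : nat := all (fun w => a w == 0) V.

Definition nzflows (V : seq nat) s : nat := nzflow_sum s \0 (conserved V).

Lemma nzflows_nil V : nzflows V [::] = 1%N.
Proof. by rewrite /nzflows /conserved /=; case: allP => // -[] w _ /=. Qed.

Lemma nzflows_loop V x s : nzflows V ((x, x) :: s) = (#|F|.-1 * nzflows V s)%N.
Proof.
rewrite /nzflows /= -sum_nz_const; apply: eq_bigr => c _; congr nzflow_sum.
by apply: functional_extensionality => w /=; rewrite /boundary subrr mulr0 addr0.
Qed.

Section Contraction.
Variables (x y : nat).
Hypothesis xy : x != y.

Definition identify (z : nat) : nat := if z == y then x else z.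

(* The demand of a flow after [y] is identified with [x]. *)
Definition merge_demand a : nat -> F :=
  fun w => if w == y then 0 else if w == x then a x + a y else a w.

Lemma merge_demand0 : merge_demand \0 = \0.
Proof.
apply: functional_extensionality => w; rewrite /merge_demand /=.
by case: (w == y); case: (w == x); rewrite ?addr0.
Qed.

Lemma merge_demand_add a b c :
  merge_demand (a \+ c \*o b) = merge_demand a \+ c \*o merge_demand b.
Proof.
apply: functional_extensionality => w; rewrite /merge_demand /=.
case: (w == y); first by rewrite mulr0 addr0.
by case: (w == x) => //; rewrite mulrDr addrACA.
Qed.

Lemma identify_neq z : (y == identify z) = false.
Proof.
rewrite /identify; have [_|zy] := eqVneq z y; first by rewrite eq_sym (negbTE xy).
by rewrite eq_sym (negbTE zy).
Qed.

Lemma merge_demand_boundary f :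
  merge_demand (boundary f) = boundary (identify f.1, identify f.2).
Proof.
apply: functional_extensionality => w; rewrite /merge_demand /boundary /=.
case: f => f1 f2 /=.
have [->|wy] := eqVneq w y; first by rewrite !identify_neq // subrr.
rewrite /identify; have [->|wx] := eqVneq w x.
  have [->|f1y] := eqVneq f1 y; have [->|f2y] := eqVneq f2 y;
  rewrite ?eqxx ?[y == f1]eq_sym ?[y == f2]eq_sym ?(negbTE f1y) ?(negbTE f2y) ?(negbTE xy);
  by rewrite /= ?subrr ?subr0 ?sub0r ?addr0 ?add0r // addrC.
by have [->|f1y] := eqVneq f1 y; have [->|f2y] := eqVneq f2 y;
  rewrite ?eqxx ?(negbTE wy) ?(negbTE wx).
Qed.

Lemma nzflow_sum_contract s a k :
  nzflow_sum (contract (x, y) s) (merge_demand a) k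
  = nzflow_sum s a (fun b => k (merge_demand b)).
Proof.
elim: s a => [|f s IHs] a //=.
by apply: eq_bigr => c _; rewrite -IHs merge_demand_add merge_demand_boundary.
Qed.

(* Given the flow on the other edges, Kirchhoff's law at [y] forces the value
   on the edge [(x, y)]; the law at the other vertices is then the law for the
   merged demand. *)
Lemma conserved_add_edge V b c : x \in V -> y \in V ->
  conserved V (b \+ c \*o boundary (x, y)) = ((c == b y) * conserved V (merge_demand b))%N.
Proof.
move=> xV yV; rewrite /conserved /merge_demand /boundary /=.
have yx : y != x by rewrite eq_sym.
have [->|cb] /= := eqVneq c (b y).
  rewrite mul1n; congr nat_of_bool; apply: eq_all => w.
  have [->|wy] := eqVneq w y.
    by rewrite eqxx (negbTE yx) /= sub0r mulrN1 subrr eqxx.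
  rewrite ?(negbTE wy) /=; have [->|wx] /= := eqVneq w x; first by rewrite subr0 mulr1.
  by rewrite subrr mulr0 addr0.
rewrite mul0n; case: allP => // /(_ y yV).
by rewrite eqxx (negbTE yx) /= sub0r mulrN1 subr_eq0 eq_sym (negbTE cb).
Qed.

Lemma nzflows_delete_contract V s : x \in V -> y \in V ->
  (nzflows V ((x, y) :: s) + nzflows V s)%N = nzflows V (contract (x, y) s).
Proof.
move=> xV yV; rewrite /nzflows /= -[in RHS]merge_demand0 nzflow_sum_contract.
have zero_edge : \0 \+ 0 \*o boundary (x, y) = \0.
  by apply: functional_extensionality => w /=; rewrite mul0r addr0.
rewrite -{2}zero_edge addnC -(bigD1 (0 : F) (P := predT)) //=.
rewrite (eq_bigr (fun c => nzflow_sum s \0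
                     (fun b => conserved V (b \+ c \*o boundary (x, y))))); last first.
  by move=> c _; rewrite add_0fun -{1}(add_0fun (c \*o _)) nzflow_sum_shift.
rewrite -nzflow_sum_big; apply: eq_nzflow_sum => b.
rewrite (eq_bigr (fun c => ((c == b y) * conserved V (merge_demand b))%N)); last first.
  by move=> c _; rewrite conserved_add_edge.
by rewrite -big_distrl /= (bigD1 (b y)) //= eqxx big1 ?mul1n // => c /negbTE ->.
Qed.

End Contraction.

(* A nowhere-zero flow cannot cross the boundary of a set of vertices [S]
   through a single edge: summing Kirchhoff's law over [S] shows that the
   value on that edge vanishes. *)
Lemma nzflows_single_crossing (V S : seq nat) s1 e s2 :
  uniq S -> {subset S <= V} ->
  all (fun f : edge => (f.1 \in S) == (f.2 \in S)) (s1 ++ s2) ->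
  (e.1 \in S) != (e.2 \in S) ->
  nzflows V (s1 ++ e :: s2) = 0%N.
Proof.
move=> uS sSV /allP noncross cross.
pose outflow a := \sum_(w <- S) a w.
have outflow_add a b : outflow (a \+ b) = outflow a + outflow b by rewrite /outflow big_split.
have outflow_scale c a : outflow (c \*o a) = c * outflow a by rewrite /outflow mulr_sumr.
have outflow_rest f : f \in s1 ++ s2 -> outflow (boundary f) = 0.
  by move=> /noncross /eqP f12; rewrite /outflow sum_boundary // f12 subrr.
have outflow_e : outflow (boundary e) != 0.
  rewrite /outflow sum_boundary //.
  by case: (e.1 \in S) (e.2 \in S) cross => [] [] //= _; rewrite ?subr0 ?sub0r ?oppr_eq0 oner_eq0.
have outflow_conserved a : conserved V a != 0%N -> outflow a = 0.
  rewrite /conserved; case: allP => // consa _; rewrite /outflow big1_seq // => w /andP [_ wS].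
  exact/eqP/consa/sSV.
have outflow_inv s : {subset s <= s1 ++ s2} ->
    forall g f c, f \in s -> outflow g = 0 -> outflow (g \+ c \*o boundary f) = 0.
  by move=> ss g f c fs outflowg; rewrite outflow_add outflow_scale outflowg outflow_rest ?ss // mulr0 addr0.
have outflow0 : outflow \0 = 0 by rewrite /outflow big1.
rewrite /nzflows nzflow_sum_cat /=.
rewrite (@nzflow_sum_inv (fun g => outflow g = 0) _ _ _ (fun _ => 0%N)) ?nzflow_sum0 //.
  by apply: outflow_inv => f fs; rewrite mem_cat fs.
move=> g outflowg; apply: big1 => c cnz.
rewrite (@nzflow_sum_inv (fun g => outflow g = 0) _ _ _ (fun _ => 0%N)) ?nzflow_sum0 //.
  by apply: outflow_inv => f fs; rewrite mem_cat fs orbT.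
move=> g' outflowg'; apply/eqP; apply: contraTT cnz => /outflow_conserved.
by rewrite !outflow_add outflow_scale outflow0 outflowg outflowg' !add0r addr0 => /eqP;
  rewrite mulf_eq0 (negbTE outflow_e) orbF negbK.
Qed.

(* The vertices of [V] reachable from one end of a bridge form a set crossed
   only by the bridge. *)
Lemma nzflows_bridge V s : wf_graph V s -> has_bridge s -> nzflows V s = 0%N.
Proof.
move=> wf /hasP [i _] /andP [ilt /andP [ne disc]].
set e := nth (0%N, 0%N) s i in ne disc; set rest := del_edge i s in disc.
have s_split : s = take i s ++ e :: drop i.+1 s by rewrite -drop_nth // cat_take_drop.
set R := reachn (size rest) rest [:: e.1].
have /allP Rclosed := reachn_size_closed rest [:: e.1].
have e1R : e.1 \in R by apply: reachn_sub; rewrite mem_head.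
set S := [seq w <- undup V | w \in R].
have memS w : (w \in S) = (w \in V) && (w \in R) by rewrite mem_filter mem_undup andbC.
have eV : e \in s by rewrite mem_nth.
rewrite s_split; apply: (@nzflows_single_crossing V S).
- by rewrite filter_uniq // undup_uniq.
- by move=> w; rewrite memS => /andP [].
- apply/allP => f frest; have fs : f \in s.
    by rewrite s_split mem_cat inE; move: frest; rewrite mem_cat => /orP [] ->; rewrite ?orbT.
  by case: (wf f fs) => f1 f2; rewrite !memS f1 f2 /=; apply: Rclosed.
- by case: (wf e eV) => e1 e2; rewrite !memS e1 e2 e1R /=; exact: disc.
Qed.

Lemma wf_graph_contract V x y s : x \in V -> wf_graph V s -> wf_graph V (contract (x, y) s).
Proof.
move=> xV wf f /mapP [g gs ->] /=; case: (wf g gs) => g1 g2.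
by case: ifP; case: ifP => _ _ /=; rewrite ?xV ?g1 ?g2.
Qed.

Lemma flow_aux_horner n V s : size s = n -> wf_graph V s ->
  (flow_aux n s).[(#|F|)%:Z] = (nzflows V s)%:Z.
Proof.
elim: n s => [|n IHn] [|[x y] s] //= size_s wf; try by rewrite hornerC nzflows_nil.
case: size_s => size_s.
have wf_s : wf_graph V s by move=> f fs; apply: wf; rewrite inE fs orbT.
have [xV yV] : x \in V /\ y \in V by apply: (wf (x, y)); rewrite mem_head.
case: ifP => bridge; first by rewrite horner0 nzflows_bridge.
have [<-|xy] := eqVneq x y.
  rewrite hornerM hornerXsubC IHn // nzflows_loop PoszM.
  have F_gt0 : (0 < #|F|)%N by apply/card_gt0P; exists 0.
  by rewrite -subn1 -subzn // mulrC.
rewrite hornerD hornerN !IHn ?size_map //; last exact: wf_graph_contract.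
by rewrite -nzflows_delete_contract // PoszD addrK.
Qed.

Definition balanced_on (vs : seq nat) g :=
  (forall w, w \notin vs -> g w = 0) /\ \sum_(w <- undup vs) g w = 0.

Lemma balanced_on0 vs : balanced_on vs \0.
Proof. by split => //; rewrite big1. Qed.

Lemma balanced_on_add vs s g f c : wf_graph vs s -> f \in s ->
  balanced_on vs g -> balanced_on vs (g \+ c \*o boundary f).
Proof.
move=> wf fs [g_out g_sum]; case: (wf f fs) => f1 f2; split.
  move=> w wn /=; rewrite g_out // /boundary.
  have [ew|] := eqVneq w f.1; first by rewrite ew f1 in wn.
  have [ew|] := eqVneq w f.2; first by rewrite ew f2 in wn.
  by move=> _ _; rewrite subrr mulr0 addr0.
rewrite big_split /= g_sum -mulr_sumr sum_boundary ?undup_uniq //.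
by rewrite !mem_undup f1 f2 subrr mulr0 addr0.
Qed.

Lemma shared_mem (vs1 vs2 : seq nat) (u v : nat) :
  (forall x, (x \in vs1) && (x \in vs2) = (x == u) || (x == v)) ->
  [/\ u \in vs1, v \in vs1, u \in vs2 & v \in vs2].
Proof.
move=> shared; have := shared u; have := shared v; rewrite eqxx orbT /= => /andP [? ?].
by rewrite eqxx /= => /andP [? ?].
Qed.

Section TwoSum.
Variables (V : seq nat) (u v : nat).

(* The demand of a flow of [G_i] that is conserved except for a net flow
   [al] leaving [u] and entering [v]. *)
Definition demand_uv (al : F) a : nat :=
  all (fun w => a w == al * boundary (u, v) w) V.

Lemma nzflows_demand0 s : nzflows V s = nzflow_sum s \0 (demand_uv 0).
Proof.
apply: eq_nzflow_sum => a; rewrite /demand_uv /conserved; congr nat_of_bool.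
by apply: eq_all => w; rewrite mul0r.
Qed.

Lemma nzflow_sum_demand_uv s al : al != 0 ->
  nzflow_sum s \0 (demand_uv al) = nzflow_sum s \0 (demand_uv 1).
Proof.
move=> alnz; rewrite [RHS](@nzflow_sum_scale s \0 (demand_uv 1) al alnz).
have -> : al \*o \0 = \0 :> (nat -> F).
  by apply: functional_extensionality => w /=; rewrite mulr0.
apply: eq_nzflow_sum => a; rewrite /demand_uv; congr nat_of_bool; apply: eq_all => w /=.
by rewrite mul1r (can2_eq (mulVKf alnz) (mulKf alnz)).
Qed.

Lemma nzflows_add_uv s :
  nzflows V ((u, v) :: s) = (#|F|.-1 * nzflow_sum s \0 (demand_uv 1%R))%N.
Proof.
rewrite /nzflows /= -sum_nz_const; apply: eq_bigr => c cnz.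
rewrite nzflow_sum_shift -(@nzflow_sum_demand_uv s (- c)) ?oppr_eq0 //.
apply: eq_nzflow_sum => a; rewrite /demand_uv /conserved /=; congr nat_of_bool.
by apply: eq_all => w; rewrite addr_eq0 mulNr.
Qed.

Variables (vs1 vs2 : seq nat).
Hypothesis uv : u != v.
Hypothesis shared : forall x, (x \in vs1) && (x \in vs2) = (x == u) || (x == v).
Hypothesis cover : forall x, (x \in V) = (x \in vs1) || (x \in vs2).

(* Off [u] and [v] a vertex lies in one side only, where Kirchhoff's law for
   the sum kills [g]; balance then forces [g v = - g u]. *)
Lemma balanced_pair_demand g b : balanced_on vs1 g -> balanced_on vs2 b ->
  conserved V (b \+ g) != 0%N -> forall w, w \in V -> g w = g u * boundary (u, v) w.
Proof.
move=> [g_out g_sum] [b_out _]; rewrite /conserved; case: allP => // cons _.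
have [u1 v1 u2 v2] := shared_mem shared.
have g_off w : w != u -> w != v -> g w = 0.
  move=> wu wv; have [w1|] := boolP (w \in vs1); last exact: g_out.
  have w2 : w \notin vs2.
    by apply/negP => w2; have := shared w; rewrite w1 w2 (negbTE wu) (negbTE wv).
  by have := cons w; rewrite cover w1 => /(_ isT) /eqP; rewrite /= b_out // add0r.
have gv : g v = - g u.
  apply/eqP; rewrite -addr_eq0 addrC; apply/eqP; rewrite -g_sum.
  rewrite (eq_big_seq (fun w => g u * (w == u)%:R + g v * (w == v)%:R)); last first.
    move=> w _; have [->|wu] := eqVneq w u; first by rewrite (negbTE uv) mulr1 mulr0 addr0.
    have [->|wv] := eqVneq w v; first by rewrite mulr0 mulr1 add0r.
    by rewrite g_off // !mulr0 addr0.
  by rewrite big_split /= -!mulr_sumr !sum_mem_indicator ?undup_uniq // !mem_undup u1 v1 !mulr1.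
move=> w _; rewrite /boundary /=.
have [->|wu] := eqVneq w u; first by rewrite (negbTE uv) subr0 mulr1.
have [->|wv] := eqVneq w v; first by rewrite gv sub0r mulrN1.
by rewrite g_off // subrr mulr0.
Qed.

Lemma conserved_split g b : balanced_on vs1 g -> balanced_on vs2 b ->
  conserved V (b \+ g) = (\sum_(al : F) (demand_uv (- al) b * demand_uv al g))%N.
Proof.
move=> bal_g bal_b; have [u1 _ _ _] := shared_mem shared.
have uV : u \in V by rewrite cover u1.
have [cons|] := eqVneq (conserved V (b \+ g)) 0%N; last first.
  move=> /[dup] ncons /(balanced_pair_demand bal_g bal_b) g_uv.
  rewrite (bigD1 (g u)) //= big1 ?addn0.
    have -> : demand_uv (g u) g = 1%N.
      by rewrite /demand_uv; case: allP => // -[] w wV; rewrite g_uv.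
    move: ncons; rewrite /conserved /demand_uv; case: allP => // cons _.
    case: allP => // -[] w wV; move: (cons w wV); rewrite /= addr_eq0 => /eqP ->.
    by rewrite g_uv // -mulNr.
  move=> al ne; rewrite /demand_uv; case: allP => _ //=.
  case: allP => // /(_ u uV) /eqP; rewrite /boundary /= eqxx (negbTE uv) subr0 mulr1 => e.
  by rewrite e eqxx in ne.
rewrite cons; apply/esym/big1 => al _; rewrite /demand_uv; case: allP => // b_al.
case: allP => // g_al; move: cons; rewrite /conserved; case: allP => // -[] w wV /=.
by rewrite (eqP (b_al w wV)) (eqP (g_al w wV)) mulNr addNr.
Qed.

(* The demands of the restrictions of a flow of [G] to the two sides are
   balanced on [vs1] and [vs2]; classify the pairs by the net flow [al]. *)
Lemma nzflows_cat_split es1 es2 : wf_graph vs1 es1 -> wf_graph vs2 es2 ->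
  nzflows V (es1 ++ es2) =
  (\sum_(al : F) (nzflow_sum es1 \0 (demand_uv al) * nzflow_sum es2 \0 (demand_uv (- al))))%N.
Proof.
move=> wf1 wf2; rewrite /nzflows nzflow_sum_cat.
rewrite (@nzflow_sum_inv (balanced_on vs1) _ _ _
  (fun a => \sum_(al : F) (demand_uv al a * nzflow_sum es2 \0 (demand_uv (- al))))%N).
- by rewrite nzflow_sum_big; apply: eq_bigr => al _; rewrite nzflow_sum_mulr.
- exact: balanced_on0.
- by move=> g f c fs; apply: balanced_on_add wf1 fs.
move=> g bal_g; rewrite add_0fun -{1}(add_0fun g) nzflow_sum_shift.
rewrite (@nzflow_sum_inv (balanced_on vs2) _ _ _
  (fun b => \sum_(al : F) (demand_uv (- al) b * demand_uv al g))%N).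
- by rewrite nzflow_sum_big; apply: eq_bigr => al _; rewrite nzflow_sum_mulr mulnC.
- exact: balanced_on0.
- by move=> b f c fs; apply: balanced_on_add wf2 fs.
by move=> b bal_b; rewrite add_0fun; apply: conserved_split.
Qed.

Lemma nzflows_two_sum es es1 es2 :
  wf_graph vs1 es1 -> wf_graph vs2 es2 -> perm_eq es (es1 ++ es2) ->
  (nzflows V es * #|F|.-1 =
   nzflows V ((u, v) :: es1) * nzflows V ((u, v) :: es2)
   + #|F|.-1 * (nzflows V es1 * nzflows V es2))%N.
Proof.
move=> wf1 wf2 pe.
have -> : nzflows V es = nzflows V (es1 ++ es2) by apply: perm_nzflow_sum.
rewrite nzflows_cat_split // (bigD1 (0 : F)) //= oppr0.
rewrite (eq_bigr (fun _ => nzflow_sum es1 \0 (demand_uv 1%R)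
                           * nzflow_sum es2 \0 (demand_uv 1%R))%N); last first.
  by move=> al alnz; rewrite !nzflow_sum_demand_uv ?oppr_eq0.
rewrite sum_nz_const !nzflows_add_uv !nzflows_demand0.
set q := #|F|.-1; set n0 := nzflow_sum es1 _ _; set n1 := nzflow_sum es1 _ _.
set m0 := nzflow_sum es2 _ _; set m1 := nzflow_sum es2 _ _.
ring.
Qed.

End TwoSum.

End FlowCounting.

Fixpoint prime_seq (k : nat) : nat :=
  if k is k'.+1 then s2val (prime_above (prime_seq k')) else 2.

Lemma prime_seq_prime k : prime (prime_seq k).
Proof. by case: k => [|k] //=; apply: (s2valP' (prime_above _)). Qed.

Lemma prime_seq_inj : injective prime_seq.
Proof.
have lt_succ k : (prime_seq k < prime_seq k.+1)%N by apply: (s2valP (prime_above _)).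
exact/incn_inj/leq_mono/(homo_ltn ltn_trans lt_succ).
Qed.

Lemma poly_eq0_primes (P : {poly int}) : (forall p, prime p -> P.[p%:Z] = 0) -> P = 0.
Proof.
move=> P_primes; apply/eqP; apply: contraT => Pnz.
have := max_poly_roots (rs := [seq (prime_seq k)%:Z | k <- iota 0 (size P)]) Pnz.
rewrite size_map size_iota ltnn; apply.
  by apply/allP => x /mapP [k _ ->]; apply/rootP/P_primes/prime_seq_prime.
by rewrite map_inj_uniq ?iota_uniq // => k l [/prime_seq_inj].
Qed.

Lemma sub_wf_graph V1 V s : {subset V1 <= V} -> wf_graph V1 s -> wf_graph V s.
Proof. by move=> sV1 wf f /wf [f1 f2]; split; apply: sV1. Qed.

Lemma wf_graph_cons V x y s :
  x \in V -> y \in V -> wf_graph V s -> wf_graph V ((x, y) :: s).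
Proof. by move=> e1 e2 wf f; rewrite inE => /orP [/eqP ->|/wf]. Qed.

Theorem lemma2p6 (vs vs1 vs2 : seq nat) (es es1 es2 : seq edge) (u v : nat) :
  wf_graph vs es -> wf_graph vs1 es1 -> wf_graph vs2 es2 ->
  nonseparable vs es ->
  u != v ->
  (forall x, (x \in vs1) && (x \in vs2) = (x == u) || (x == v)) ->
  (forall x, (x \in vs) = (x \in vs1) || (x \in vs2)) ->
  perm_eq es (es1 ++ es2) ->
  flowpoly es * ('X - 1) =
    flowpoly ((u, v) :: es1) * flowpoly ((u, v) :: es2)
    + ('X - 1) * (flowpoly es1 * flowpoly es2).
Proof.
move=> wf wf1 wf2 _ uv shared cover pe.
have [u1 v1 _ _] := shared_mem shared.
have [sub1 sub2] : {subset vs1 <= vs} /\ {subset vs2 <= vs}.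
  by split=> x x_in; rewrite cover x_in ?orbT.
have wf1' := sub_wf_graph sub1 wf1; have wf2' := sub_wf_graph sub2 wf2.
have [uV vV] : u \in vs /\ v \in vs by rewrite !cover u1 v1.
apply/eqP; rewrite -subr_eq0; apply/eqP; apply: poly_eq0_primes => p p_pr.
have := nzflows_two_sum 'F_p uv shared cover wf1 wf2 pe.
rewrite card_Fp // => /(congr1 Posz); rewrite !PoszD !PoszM -subn1 -subzn ?prime_gt0 //.
move=> count_eq; rewrite !(hornerE, hornerD, hornerM, hornerN) -(card_Fp p_pr) /flowpoly.
rewrite !(flow_aux_horner _ _ wf) // !(flow_aux_horner _ _ (wf_graph_cons uV vV wf1')) //.
rewrite !(flow_aux_horner _ _ (wf_graph_cons uV vV wf2')) //.
rewrite !(flow_aux_horner _ _ wf1') // !(flow_aux_horner _ _ wf2') // card_Fp //.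
by rewrite count_eq !mulrA subrr.
Qed.
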